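(* Let $A,B$ be real constants and let $(x_n)_{n\ge 0}$ be a solution of $$x_{n+10}=\frac{x_n}{A+B\,x_nx_{n+2}x_{n+4}x_{n+6}x_{n+8}},\qquad n\ge 0,$$ with initial values $x_0,\dots,x_9$, such that all terms are well-defined and nonzero. For $k\in\{0,\dots,9\}$ let $P_k=x_{\tau(k)}x_{\tau(k)+2}x_{\tau(k)+4}x_{\tau(k)+6}x_{\tau(k)+8}$ and for $s\ge 0$ let $m_s=5s+\lfloor k/2\rfloor$. Then for all $k\in\{0,\dots,9\}$ and $n\ge 0$: if $A=1$, $$x_{10n+k}=x_k\prod_{s=0}^{n-1}\frac{1+B\,m_s\,P_k}{1+B\,(m_s+1)\,P_k};$$ if $A\neq 1$, $$x_{10n+k}=x_k\prod_{s=0}^{n-1}\frac{A^{m_s}+\frac{B(1-A^{m_s})}{1-A}P_k}{A^{m_s+1}+\frac{B(1-A^{m_s+1})}{1-A}P_k}.$$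
   Context: $\tau(k)\in\{0,1\}$ denotes the remainder of $k$ upon division by $2$ and $\lfloor\cdot\rfloor$ is the floor function. An empty product equals $1$. *)

From Stdlib Require Import Reals Lra Lia.
Open Scope R_scope.

Fixpoint prodR (n : nat) (f : nat -> R) : R :=
  match n with
  | O => 1
  | S m => prodR m f * f m
  end.

Definition tau (k : nat) : nat := Nat.modulo k 2.

Definition Pk (x : nat -> R) (k : nat) : R :=
  x (tau k) * x (tau k + 2)%nat * x (tau k + 4)%nat * x (tau k + 6)%nat
    * x (tau k + 8)%nat.

Definition ms (k s : nat) : nat := (5 * s + Nat.div k 2)%nat.

From Stdlib Require Import Reals Lra Lia.
Open Scope R_scope.

(* With y_n = x_n x_(n+2) x_(n+4) x_(n+6) x_(n+8), the recurrence gives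
   y_(n+2) = y_n x_(n+10) / x_n = y_n / (A + B y_n), i.e. the reciprocals
   z_n = 1 / y_n obey the affine recurrence z_(n+2) = A z_n + B, whose
   solution along each parity class is z_(p+2j) = A^j z_p + B (1 + A + ... + A^(j-1)).
   Since x_(n+10) = x_n z_n / z_(n+2), the terms x_(10n+k) telescope into a
   product of ratios of consecutive z's along the class of tau(k), starting
   at index tau(k) + 2 m_s. *)

Lemma prodR_ext (n : nat) (f g : nat -> R) :
  (forall s, f s = g s) -> prodR n f = prodR n g.
Proof. intros Hfg; induction n as [|n IH]; simpl; [reflexivity | now rewrite IH, Hfg]. Qed.

Lemma prodR_telescope (u f : nat -> R) :
  (forall n, u (S n) = u n * f n) -> forall n, u n = u 0%nat * prodR n f.
Proof.
  intros Hstep n; induction n as [|n IH]; simpl.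
  - ring.
  - rewrite Hstep, IH; ring.
Qed.

Fixpoint geom_sum (A : R) (j : nat) : R :=
  match j with O => 0 | S i => A * geom_sum A i + 1 end.

Lemma geom_sum_1 (j : nat) : geom_sum 1 j = INR j.
Proof. induction j as [|j IH]; simpl geom_sum; [reflexivity | rewrite IH, S_INR; ring]. Qed.

Lemma geom_sum_neq1 (A : R) (j : nat) : A <> 1 -> geom_sum A j = (1 - A ^ j) / (1 - A).
Proof.
  intros HA; assert (1 - A <> 0) by lra.
  induction j as [|j IH]; simpl geom_sum; [| rewrite IH]; simpl; field; assumption.
Qed.

Lemma affine_recurrence_closed_form (A B : R) (u : nat -> R) :
  (forall n, u (S n) = A * u n + B) ->
  forall j, u j = A ^ j * u 0%nat + B * geom_sum A j.
Proof.
  intros Hstep j; induction j as [|j IH]; simpl.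
  - ring.
  - rewrite Hstep, IH; ring.
Qed.

Lemma ten_mul_add_eq (k n : nat) : (10 * n + k = tau k + 2 * ms k n)%nat.
Proof. unfold tau, ms; pose proof (Nat.div_mod k 2); lia. Qed.

Lemma affine_ratio_scale (a b c d w : R) : w <> 0 ->
  (a * / w + b) / (c * / w + d) = (a + b * w) / (c + d * w).
Proof.
  intros Hw.
  replace (a * / w + b) with ((a + b * w) * / w) by (field; exact Hw).
  replace (c * / w + d) with ((c + d * w) * / w) by (field; exact Hw).
  apply Rdiv_mult_r_r, Rinv_neq_0_compat, Hw.
Qed.

Definition window (x : nat -> R) (n : nat) : R :=
  x n * x (n + 2)%nat * x (n + 4)%nat * x (n + 6)%nat * x (n + 8)%nat.

Section Recurrence.

Variables (A B : R) (x : nat -> R).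
Hypothesis Hnz : forall n, x n <> 0.
Hypothesis Hden : forall n, A + B * window x n <> 0.
Hypothesis Hrec : forall n, x (n + 10)%nat = x n / (A + B * window x n).

Lemma window_neq0 (n : nat) : window x n <> 0.
Proof. unfold window; repeat apply Rmult_integral_contrapositive_currified; auto. Qed.

Lemma window_shift2 (n : nat) : window x (n + 2) = window x n * x (n + 10)%nat / x n.
Proof.
  unfold window.
  replace (n + 2 + 2)%nat with (n + 4)%nat by lia.
  replace (n + 2 + 4)%nat with (n + 6)%nat by lia.
  replace (n + 2 + 6)%nat with (n + 8)%nat by lia.
  replace (n + 2 + 8)%nat with (n + 10)%nat by lia.
  field; apply Hnz.
Qed.

Lemma inv_window_step (n : nat) : / window x (n + 2) = A * / window x n + B.
Proof.
  rewrite window_shift2, Hrec.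
  pose proof (Hden n); pose proof (Hnz n); pose proof (window_neq0 n).
  field; auto.
Qed.

Lemma inv_window_closed_form (p j : nat) :
  / window x (p + 2 * j) = A ^ j * / window x p + B * geom_sum A j.
Proof.
  rewrite <- (Nat.add_0_r p) at 2.
  apply (affine_recurrence_closed_form A B (fun j => / window x (p + 2 * j))).
  intros i; replace (p + 2 * S i)%nat with (p + 2 * i + 2)%nat by lia.
  apply inv_window_step.
Qed.

Lemma x_shift10 (n : nat) : x (n + 10)%nat = x n * (/ window x n / / window x (n + 2)).
Proof.
  unfold Rdiv; rewrite Rinv_inv, window_shift2.
  pose proof (Hnz n); pose proof (Hnz (n + 10)%nat); pose proof (window_neq0 n).
  field; auto.
Qed.

Lemma x_residue_class_product (k n : nat) :
  x (10 * n + k)%nat = x k * prodR n (fun s =>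
    (A ^ ms k s + B * geom_sum A (ms k s) * Pk x k) /
    (A ^ (ms k s + 1) + B * geom_sum A (ms k s + 1) * Pk x k)).
Proof.
  replace k with (10 * 0 + k)%nat at 2 by lia.
  apply (prodR_telescope (fun n => x (10 * n + k)%nat)); intros s.
  replace (10 * S s + k)%nat with (10 * s + k + 10)%nat by lia.
  rewrite x_shift10, ten_mul_add_eq.
  replace (tau k + 2 * ms k s + 2)%nat with (tau k + 2 * (ms k s + 1))%nat by lia.
  rewrite !inv_window_closed_form, affine_ratio_scale by apply window_neq0.
  reflexivity.
Qed.

End Recurrence.

Theorem mainTheorem2 (A B : R) (x : nat -> R)
  (Hnz : forall n : nat, x n <> 0)
  (Hden : forall n : nat,
     A + B * x n * x (n + 2)%nat * x (n + 4)%nat * x (n + 6)%nat * x (n + 8)%nat <> 0)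
  (Hrec : forall n : nat,
     x (n + 10)%nat =
       x n / (A + B * x n * x (n + 2)%nat * x (n + 4)%nat * x (n + 6)%nat * x (n + 8)%nat)) :
  forall k n : nat, (k <= 9)%nat ->
    (A = 1 ->
       x (10 * n + k)%nat =
         x k * prodR n (fun s =>
           (1 + B * INR (ms k s) * Pk x k) / (1 + B * (INR (ms k s) + 1) * Pk x k))) /\
    (A <> 1 ->
       x (10 * n + k)%nat =
         x k * prodR n (fun s =>
           (A ^ (ms k s) + B * (1 - A ^ (ms k s)) / (1 - A) * Pk x k) /
           (A ^ (ms k s + 1) + B * (1 - A ^ (ms k s + 1)) / (1 - A) * Pk x k))).
Proof.
  intros k n _.
  assert (Hwin : forall m, B * window x m
                           = B * x m * x (m + 2)%nat * x (m + 4)%nat * x (m + 6)%nat * x (m + 8)%nat).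
  { intros m; unfold window; ring. }
  assert (Hden' : forall m, A + B * window x m <> 0) by (intros m; rewrite Hwin; apply Hden).
  assert (Hrec' : forall m, x (m + 10)%nat = x m / (A + B * window x m))
    by (intros m; rewrite Hwin; apply Hrec).
  rewrite (x_residue_class_product A B x Hnz Hden' Hrec').
  split; intros HA; f_equal; apply prodR_ext; intros s.
  - subst A; rewrite !pow1, !geom_sum_1, plus_INR; reflexivity.
  - rewrite !geom_sum_neq1 by exact HA; unfold Rdiv; rewrite !Rmult_assoc; reflexivity.
Qed.
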